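(* For any nonempty metric spaces $X$ and $Y$, $d_{GH}(X,Y)=d^{ls}_{GH}(X,Y)$.
   Context: For a metric space, $|xy|$ denotes the distance between $x$ and $y$. A set-valued map $f:X\rightrightarrows Y$ assigns to each $x\in X$ a nonempty subset $f(x)\subseteq Y$; it is identified with its graph $\bigcup_{x\in X}\{x\}\times f(x)\subseteq X\times Y$. A correspondence between $X$ and $Y$ is a subset $R\subseteq X\times Y$ whose projections to $X$ and to $Y$ are both surjective; it is regarded as the set-valued map $x\mapsto R(x)=\{y:(x,y)\in R\}$, and $R^{-1}=\{(y,x):(x,y)\in R\}$ is a correspondence between $Y$ and $X$. $\mathcal R(X,Y)$ is the set of all correspondences. The distortion of a nonempty relation $\sigma\subseteq X\times Y$ is $\operatorname{dis}\sigma=\sup\{||xx'|-|yy'||:(x,y),(x',y')\in\sigma\}\in[0,\infty]$. The Gromov–Hausdorff distance is $d_{GH}(X,Y)=\frac12\inf\{\operatorname{dis}R:R\in\mathcal R(X,Y)\}$ (this agrees with the usual definition via isometric embeddings). A set-valued map $f:X\rightrightarrows Y$ of topological spaces is lower semicontinuous if for every $x\in X$ and every open $U\subseteq Y$ with $f(x)\cap U\neq\emptyset$ there is a neighborhood $V$ of $x$ with $f(x')\cap U\ne\emptyset$ for all $x'\in V$. $\mathcal R_{ls}(X,Y)$ is the set of $R\in\mathcal R(X,Y)$ such that both $R:X\rightrightarrows Y$ and $R^{-1}:Y\rightrightarrows X$ are lower semicontinuous, and $d^{ls}_{GH}(X,Y)=\frac12\inf\{\operatorname{dis}R:R\in\mathcal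 R_{ls}(X,Y)\}$. *)

From HB Require Import structures.
From mathcomp Require Import all_boot all_order all_algebra.
From mathcomp Require Import all_classical all_reals all_analysis.
Set Implicit Arguments. Unset Strict Implicit. Unset Printing Implicit Defensive.
Import Order.TTheory GRing.Theory Num.Theory.
Local Open Scope classical_set_scope.
Local Open Scope ring_scope.

Record MetricSpace (R : realType) := {
  mcarrier :> Type;
  mdist : mcarrier -> mcarrier -> R;
  mdist_ge0 : forall x y, 0 <= mdist x y;
  mdist_eq0 : forall x y, mdist x y = 0 <-> x = y;
  mdist_sym : forall x y, mdist x y = mdist y x;
  mdist_tri : forall x y z, mdist x z <= mdist x y + mdist y z }.

Arguments mdist {R} m x y.

Section GH.
Variable R : realType.

Definition dis (X Y : MetricSpace R) (sigma : set (X * Y)) : \bar R :=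
  ereal_sup [set (`| mdist X pq.1.1 pq.2.1 - mdist Y pq.1.2 pq.2.2 |)%:E
            | pq in [set pq : (X * Y) * (X * Y) | sigma pq.1 /\ sigma pq.2]].

Definition correspondence (X Y : MetricSpace R) (S : set (X * Y)) : Prop :=
  (forall x : X, exists y : Y, S (x, y)) /\ (forall y : Y, exists x : X, S (x, y)).

Definition mopen (Y : MetricSpace R) (U : set Y) : Prop :=
  forall y, U y -> exists2 r : R, 0 < r & forall z, mdist Y y z < r -> U z.

Definition mnbhs (X : MetricSpace R) (x : X) (V : set X) : Prop :=
  exists2 r : R, 0 < r & forall z, mdist X x z < r -> V z.

Definition lsc (X Y : MetricSpace R) (F : X -> set Y) : Prop :=
  forall (x : X) (U : set Y), mopen U -> F x `&` U !=set0 ->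
    exists V : set X, mnbhs x V /\ forall x', V x' -> F x' `&` U !=set0.

Definition corr_map (X Y : MetricSpace R) (S : set (X * Y)) : X -> set Y :=
  fun x => [set y | S (x, y)].
Definition corr_inv_map (X Y : MetricSpace R) (S : set (X * Y)) : Y -> set X :=
  fun y => [set x | S (x, y)].

Definition ls_correspondence (X Y : MetricSpace R) (S : set (X * Y)) : Prop :=
  correspondence S /\ lsc (corr_map S) /\ lsc (corr_inv_map S).

Definition dGH (X Y : MetricSpace R) : \bar R :=
  ((2%:R)^-1)%:E * ereal_inf [set dis S | S in [set S | @correspondence X Y S]].

Definition dGH_ls (X Y : MetricSpace R) : \bar R :=
  ((2%:R)^-1)%:E * ereal_inf [set dis S | S in [set S | @ls_correspondence X Y S]].
End GH.

(* Any correspondence S can be thickened to the set of pairs lying within e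
   of S in the max-metric of X × Y.  The thickening is again a correspondence,
   its fibers are open, so it is lower semicontinuous in both directions, and
   its distortion exceeds that of S by at most 4e.  Letting e tend to 0 shows
   that lower semicontinuous correspondences realise the same infimum. *)

From Pilot Require Import Defs.
From mathcomp Require Import all_boot all_order all_algebra.
From mathcomp Require Import all_classical all_reals all_analysis.
From mathcomp Require Import lra.
Set Implicit Arguments. Unset Strict Implicit. Unset Printing Implicit Defensive.
Import Order.TTheory GRing.Theory Num.Theory.
Local Open Scope classical_set_scope.
Local Open Scope ring_scope.

Section Thickening.
Variable R : realType.
Implicit Types X Y : MetricSpace R.

Lemma mdist_refl X (x : X) : Defs.mdist X x x = 0.
Proof. exact/(proj2 (mdist_eq0 _ _)). Qed.

Lemma mopen_ball X (a : X) (e : R) : mopen [set x | Defs.mdist X x a < e].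
Proof.
move=> x /= xa; exists (e - Defs.mdist X x a); first by rewrite subr_gt0.
move=> z xz; have := mdist_tri z x a; rewrite mdist_sym in xz; lra.
Qed.

Lemma lsc_of_mopen_fibers X Y (F : X -> set Y) :
  (forall y, mopen [set x | F x y]) -> lsc F.
Proof.
move=> Fopen x U _ [y [Fxy Uy]].
have [r r0 ball_r] := Fopen y x Fxy.
by exists [set z | Defs.mdist X x z < r]; split=> [|z /ball_r Fzy]; [exists r|exists y].
Qed.

Lemma mdist_sub_le X (x1 x2 q1 q2 : X) :
  `|Defs.mdist X x1 x2 - Defs.mdist X q1 q2| <= Defs.mdist X x1 q1 + Defs.mdist X x2 q2.
Proof.
have := mdist_tri x1 q1 x2; have := mdist_tri q1 q2 x2.
have := mdist_tri q1 x1 q2; have := mdist_tri x1 x2 q2.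
rewrite (mdist_sym q1 x1) (mdist_sym x2 q2) ler_norml; move=> *; apply/andP; lra.
Qed.

Definition thicken X Y (S : set (X * Y)) (e : R) : set (X * Y) :=
  fun p => exists2 q, S q & Defs.mdist X p.1 q.1 < e /\ Defs.mdist Y p.2 q.2 < e.

Lemma sub_thicken X Y (S : set (X * Y)) e : 0 < e -> S `<=` thicken S e.
Proof. by move=> e0 p Sp; exists p => //; rewrite !mdist_refl. Qed.

Lemma thicken_ls_correspondence X Y (S : set (X * Y)) e :
  correspondence S -> 0 < e -> ls_correspondence (thicken S e).
Proof.
move=> [SX SY] e0; split; [|split]; first split.
- by move=> x; have [y /(sub_thicken e0)] := SX x; exists y.
- by move=> y; have [x /(sub_thicken e0)] := SY y; exists x.
- apply: lsc_of_mopen_fibers => y x [q Sq /= [xq yq]].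
  have [r r0 ball_r] := mopen_ball xq.
  by exists r => // z /ball_r zq; exists q.
- apply: lsc_of_mopen_fibers => x y [q Sq /= [xq yq]].
  have [r r0 ball_r] := mopen_ball yq.
  by exists r => // z /ball_r zq; exists q.
Qed.

Lemma dis_thicken X Y (S : set (X * Y)) e :
  (dis (thicken S e) <= dis S + (4 * e)%:E)%E.
Proof.
apply: ge_ereal_sup => _ [[[x1 y1] [x2 y2]] [[q1 Sq1 [xq1 yq1]] [q2 Sq2 [xq2 yq2]]] <-].
have disq : ((`|Defs.mdist X q1.1 q2.1 - Defs.mdist Y q1.2 q2.2|)%:E <= dis S)%E.
  by apply: ereal_sup_ubound; exists (q1, q2).
apply: le_trans _ (leeD2r _ disq); rewrite -EFinD lee_fin /=.
rewrite /= in xq1 yq1 xq2 yq2.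
move: (mdist_sub_le x1 x2 q1.1 q2.1) (mdist_sub_le y1 y2 q1.2 q2.2).
set D := _ - _ in disq *; have := ler_norm D; have := ler_norm (- D).
rewrite normrN !ler_norml => DN DP /andP[? ?] /andP[? ?].
rewrite /D in DN DP *; apply/andP; split; lra.
Qed.

End Thickening.

Theorem mainTheorem1 (R : realType) (X Y : MetricSpace R) :
  inhabited X -> inhabited Y -> dGH X Y = dGH_ls X Y.
Proof.
move=> _ _; rewrite /dGH /dGH_ls; congr (_ * _)%E; apply/eqP; rewrite eq_le.
apply/andP; split.
  by apply: ereal_inf_le_tmp => _ [S [corrS _] <-]; exists S.
apply: le_ereal_inf_tmp => _ [S corrS <-]; apply/lee_addgt0Pr => e e0.
have e4_gt0 : 0 < e / 4 by rewrite divr_gt0.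
have e4K : 4 * (e / 4) = e by rewrite mulrC divfK // pnatr_eq0.
have := dis_thicken S (e / 4); rewrite e4K => thickS_le.
apply: le_trans _ thickS_le; apply: ereal_inf_lbound.
exists (thicken S (e / 4)) => //.
exact: thicken_ls_correspondence.
Qed.
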